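(* Consider the two-evaluator model described in the context with $d=2$ attributes, fraction of disadvantaged applicants $\alpha=1/2$, $\lambda=1$ (both attributes protected) and bias factor $\beta=0$. Let $X^{\max}_D=\max_{i\in\mathcal I_D}x_i$ and $X^{\max}_A=\max_{i\in\mathcal I_A}x_i$. Then for every $\gamma\in(0,1)$, $$\mathrm{err}_{\mathrm{hol}}-\mathrm{err}_{\mathrm{seg}}=\frac{\gamma(1-\gamma)}{2}\Big[4\,\mathbb P\big(X^{\max}_D>2X^{\max}_A\big)-1\Big].$$ Consequently, for every $\gamma\in(0,1)$, $\mathrm{err}_{\mathrm{seg}}<\mathrm{err}_{\mathrm{hol}}$ if and only if $\mathbb P\big(X^{\max}_D>2X^{\max}_A\big)>1/4$; this condition depends only on $n$ and $\mathcal D$.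
   Context: Model. There are $n$ applicants (with $n$ even) and $d=2$ attributes. A fixed set $\mathcal I_D\subseteq[n]$ of $n/2$ applicants is ''disadvantaged''; the remaining set $\mathcal I_A=[n]\setminus\mathcal I_D$ is ''advantaged''. The two attributes of each applicant have identical true value: $x_{i1}=x_{i2}=:x_i$, where $x_1,\dots,x_n$ are i.i.d. from a continuous distribution $\mathcal D$ supported on $[0,\infty)$. A fraction $\lambda$ of the attributes are ''protected'' (for $d=2$: $\lambda=1/2$ means a specified one of the two attributes is protected, $\lambda=1$ means both are). There are two evaluators; each is independently ''biased'' with probability $\gamma$, independently of everything else. An unbiased evaluator assigned attribute $j$ of applicant $i$ reports $y_{ij}=x_{ij}$; a biased evaluator reports $y_{ij}=\beta x_{ij}$ if $j$ is protected and $i\in\mathcal I_D$, and $y_{ij}=x_{ij}$ otherwise, where $\beta\in[0,1)$. Each (applicant, attribute) pair is evaluated by exactly one evaluator. Holistic allocation: the applicants are split uniformly at random into two sets of size $n/2$, and each evaluator evaluates both attributes of the applicants in one set. Segmented allocation: uniformly at random, one evaluator evaluates attribute 1 of all applicants and the other evaluates attribute 2 of all applicants. Assignments are independent of the values and of which evaluators are biased. The top-1 error of an allocation scheme is $\mathrm{err}=\mathbb P\big(\arg\max_{i\in[n]} x_i\neq \arg\max_{i\in[n]}(y_{i1}+y_{i2})\big)$ under that scheme; $\mathrm{err}_{\mathrm{hol}}$ and $\mathrm{err}_{\mathrm{seg}}$ denote the errors under holistic and segmented allocation. *)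

From HB Require Import structures.
From mathcomp Require Import all_boot all_order all_algebra.
From mathcomp Require Import all_classical all_reals all_analysis.
Set Implicit Arguments. Unset Strict Implicit. Unset Printing Implicit Defensive.
Import Order.TTheory GRing.Theory Num.Theory.
Import numFieldNormedType.Exports.
Local Open Scope classical_set_scope.
Local Open Scope ring_scope.

Section Model.
Variables (d : measure_display) (T : measurableType d) (R : realType).
Variable (P : probability T R).
Variable (n : nat).

Definition prob (A : set T) : R := fine (P A).

Definition mutually_independent (X : 'I_n -> {RV P >-> R}) : Prop :=
  forall B : 'I_n -> set R, (forall i, measurable (B i)) ->
    prob (\bigcap_(i in [set: 'I_n]) (X i @^-1` B i)) = \prod_(i < n) prob (X i @^-1` B i).

Definition iid_with_law (X : 'I_n -> {RV P >-> R}) (D : probability R R) : Prop :=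
  mutually_independent X /\
  forall i (A : set R), measurable A -> distribution P (X i) A = D A.

Definition continuous_law_nonneg (D : probability R R) : Prop :=
  (forall r : R, D [set r] = 0%E) /\ D `[0, +oo[%classic = 1%E.

Definition is_argmax (f : 'I_n -> R) (i : 'I_n) : Prop :=
  forall j, j != i -> f j < f i.

(* Evaluators are indexed by bool, attributes by 'I_2.
   [alloc i j] is the evaluator of attribute j of applicant i;
   [biased e] says evaluator e is biased; [prot j] says attribute j is protected. *)
Definition report (beta : R) (ID : {set 'I_n}) (prot : 'I_2 -> bool)
  (biased : bool -> bool) (alloc : 'I_n -> 'I_2 -> bool)
  (i : 'I_n) (j : 'I_2) (v : R) : R :=
  if [&& biased (alloc i j), prot j & i \in ID] then beta * v else v.

(* total reported score y_i1 + y_i2, where x_i1 = x_i2 = x_i *)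
Definition score beta ID prot biased alloc (x : 'I_n -> R) (i : 'I_n) : R :=
  \sum_(j < 2) report beta ID prot biased alloc i j (x i).

Definition err_event beta ID prot biased alloc (X : 'I_n -> {RV P >-> R}) : set T :=
  [set w | ~ exists i, is_argmax (fun k => X k w) i /\
                      is_argmax (score beta ID prot biased alloc (fun k => X k w)) i].

Definition bias_weight (gamma : R) (biased : {ffun bool -> bool}) : R :=
  \prod_(e : bool) (if biased e then gamma else 1 - gamma).

(* holistic: evaluator [false] gets both attributes of applicants in S,
   evaluator [true] those of the complement; S uniform among (n/2)-subsets *)
Definition hol_alloc (S : {set 'I_n}) : 'I_n -> 'I_2 -> bool :=
  fun i _ => i \notin S.

(* segmented: if c, evaluator [false] gets attribute 0 and [true] attribute 1;
   otherwise the reverse; c uniform *)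
Definition seg_alloc (c : bool) : 'I_n -> 'I_2 -> bool :=
  fun _ j => if c then (j != ord0) else (j == ord0).

Definition err_hol beta gamma ID prot X : R :=
  \sum_(b : {ffun bool -> bool}) bias_weight gamma b *
    ((#|[set S : {set 'I_n} | #|S| == n./2]|%:R)^-1 *
     \sum_(S : {set 'I_n} | #|S| == n./2)
        prob (err_event beta ID prot b (hol_alloc S) X)).

Definition err_seg beta gamma ID prot X : R :=
  \sum_(b : {ffun bool -> bool}) bias_weight gamma b *
    (2^-1 * \sum_(c : bool) prob (err_event beta ID prot b (seg_alloc c) X)).

Definition maxD_gt_2maxA (ID : {set 'I_n}) (X : 'I_n -> {RV P >-> R}) : set T :=
  (* since ID and its complement are finite and nonempty, max_D > 2 max_A
     iff some i in ID beats 2 * x_k for every k outside ID *)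
  [set w | exists i, i \in ID /\ forall k, k \notin ID -> 2 * X k w < X i w].

End Model.

From HB Require Import structures.
From mathcomp Require Import all_boot all_order all_algebra.
From mathcomp Require Import fingroup perm.
From mathcomp Require Import all_classical all_reals all_analysis.
From mathcomp Require Import measurable_realfun.
From mathcomp Require Import ring lra.
Import Order.TTheory GRing.Theory Num.Theory.
Local Open Scope classical_set_scope.
Local Open Scope ring_scope.
Set Implicit Arguments. Unset Strict Implicit. Unset Printing Implicit Defensive.

(* Write p = P(X^max_D > 2 X^max_A).  The error difference err_hol - err_seg is
   a gamma-weighted sum over the four bias patterns of the evaluators.  When
   both or neither evaluator is biased the scores do not depend on the
   allocation, so these patterns contribute nothing.  When exactly one
   evaluator is biased, outside the null event of ties or negative values:
   - segmented allocation halves every disadvantaged score, so it errs iff the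
     best applicant is disadvantaged but X^max_D <= 2 X^max_A: probability
     1/2 - p, since by exchangeability the best applicant is uniform;
   - holistic allocation zeroes the disadvantaged applicants graded by the
     biased evaluator, so it errs iff the best applicant is one of them; over
     the two mixed patterns these sets partition the disadvantaged applicants,
     so the two error probabilities add up to 1/2.
   Hence the difference is gamma (1 - gamma) ((1/2) - 2 (1/2 - p)). *)

Section FiniteQuantifiers.
Variable T : Type.

Lemma existsE_cond (I : finType) (B : pred I) (F : I -> set T) :
  [set w | exists i, B i /\ F i w] = \big[setU/set0]_(i | B i) F i.
Proof.
rewrite -bigcup_seq_cond; apply/seteqP; split => w; last by move=> [i /andP[_ Bi] Fi]; exists i.
by move=> [i [Bi Fi]]; exists i; rewrite /= ?mem_index_enum.
Qed.

Lemma existsE (I : finType) (F : I -> set T) :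
  [set w | exists i, F i w] = \big[setU/set0]_i F i.
Proof.
rewrite -existsE_cond; apply/seteqP; split => w [i Fi]; exists i => //.
by case: Fi.
Qed.

Lemma forallE (I : finType) (F : I -> set T) :
  [set w | forall i, F i w] = \big[setI/setT]_i F i.
Proof.
rewrite -(bigcap_seq_cond (index_enum I) F xpredT).
by apply/seteqP; split => w H i; [move=> _|]; apply: H; rewrite /= ?mem_index_enum.
Qed.

End FiniteQuantifiers.

Section Measurability.
Context d (T : measurableType d) (R : realType).

Lemma measurable_exists (I : finType) (F : I -> set T) :
  (forall i, measurable (F i)) -> measurable [set w | exists i, F i w].
Proof. by move=> mF; rewrite existsE; apply: bigsetU_measurable. Qed.

Lemma measurable_forall (I : finType) (F : I -> set T) :
  (forall i, measurable (F i)) -> measurable [set w | forall i, F i w].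
Proof. by move=> mF; rewrite forallE; apply: bigsetI_measurable. Qed.

Lemma measurable_guard_and (b : bool) (A : set T) :
  measurable A -> measurable [set w | b /\ A w].
Proof.
move=> mA; case: b.
  by rewrite (_ : [set w | true /\ _] = A) //; apply/seteqP; split => w // [].
by rewrite (_ : [set w | false /\ _] = set0) //; apply/seteqP; split => w [].
Qed.

Lemma measurable_guard_imp (b : bool) (A : set T) :
  measurable A -> measurable [set w | b -> A w].
Proof.
move=> mA; case: b; last by rewrite (_ : [set w | false -> _] = setT) //; apply/seteqP; split.
by rewrite (_ : [set w | true -> _] = A) //; apply/seteqP; split => [w /(_ isT)|w Aw _].
Qed.

Lemma measurable_lt (f g : T -> R) : measurable_fun setT f -> measurable_fun setT g ->
  measurable [set w | f w < g w].
Proof.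
move=> mf mg.
by have := @measurable_fun_ltr _ _ _ setT f g mf mg measurableT [set true] I; rewrite setTI.
Qed.

Lemma measurable_eq (f g : T -> R) : measurable_fun setT f -> measurable_fun setT g ->
  measurable [set w | f w = g w].
Proof.
move=> mf mg; rewrite (_ : [set w | _] = [set w | f w == g w]); last first.
  by apply/seteqP; split => w /= /eqP.
by have := @measurable_fun_eqr _ _ _ setT f g mf mg measurableT [set true] I; rewrite setTI.
Qed.

End Measurability.

Section ProbabilityFacts.
Context d (T : measurableType d) (R : realType) (P : probability T R).
Local Notation pr := (prob P).

Lemma probE A : measurable A -> P A = (pr A)%:E.
Proof.
move=> mA; rewrite /prob fineK // ge0_fin_numE ?measure_ge0 //.
by rewrite (le_lt_trans (probability_le1 _ mA)) // ltry.
Qed.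

Lemma prob_ge0 A : 0 <= pr A.
Proof. by rewrite /prob fine_ge0 // measure_ge0. Qed.

Lemma prob_le A B : measurable A -> measurable B -> A `<=` B -> pr A <= pr B.
Proof. by move=> mA mB AB; rewrite -lee_fin -!probE // le_measure // inE. Qed.

Lemma probU A B : measurable A -> measurable B -> A `&` B = set0 ->
  pr (A `|` B) = pr A + pr B.
Proof.
move=> mA mB AB; apply: EFin_inj.
by rewrite EFinD -!probE ?measureU //; exact: measurableU.
Qed.

Lemma prob_bigsetU n (B : {pred 'I_n}) (F : 'I_n -> set T) :
  (forall i, measurable (F i)) -> (forall i j, i != j -> F i `&` F j = set0) ->
  pr (\big[setU/set0]_(i < n | B i) F i) = \sum_(i < n | B i) pr (F i).
Proof.
move=> mF dF; apply: EFin_inj; rewrite -probE; last exact: bigsetU_measurable.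
rewrite measure_bigsetU_ord_cond //.
  by rewrite -sumEFin; apply: eq_bigr => i _; exact: probE.
move=> i j _ _ [w Fij]; apply/eqP/negPn/negP => /dF Fij0.
by move: Fij; rewrite Fij0.
Qed.

Lemma prob_nullU A B : measurable A -> measurable B -> pr A = 0 -> pr B = 0 ->
  pr (A `|` B) = 0.
Proof.
move=> mA mB A0 B0; apply/eqP; rewrite eq_le prob_ge0 andbT -lee_fin -probE; last first.
  exact: measurableU.
apply: le_trans (measureU2 P mA mB) _; change (P A + P B <= 0%:E)%E.
by rewrite !probE // A0 B0 adde0.
Qed.

Lemma prob_null_exists (I : finType) (F : I -> set T) :
  (forall i, measurable (F i)) -> (forall i, pr (F i) = 0) ->
  pr [set w | exists i, F i w] = 0.
Proof.
move=> mF F0; rewrite existsE.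
suff [] : measurable (\big[setU/set0]_i F i) /\ pr (\big[setU/set0]_i F i) = 0 by [].
elim/big_ind: _ => //; first by rewrite /prob measure0.
by move=> A B [mA A0] [mB B0]; split; [exact: measurableU|exact: prob_nullU].
Qed.

Lemma prob_eq_outside_null A B N : measurable A -> measurable B -> measurable N ->
  pr N = 0 -> A `&` ~` N = B `&` ~` N -> pr A = pr B.
Proof.
move=> mA mB mN N0 AB.
have drop C : measurable C -> pr C = pr (C `&` ~` N).
  move=> mC; have mCN : measurable (C `&` N) by exact: measurableI.
  rewrite -[in LHS](setUIDK C N) probU //; last 2 first.
  - by apply: measurableD.
  - by rewrite setDE setIACA setICr setI0.
  suff -> : pr (C `&` N) = 0 by rewrite add0r.
  by apply/eqP; rewrite eq_le prob_ge0 andbT -N0 prob_le.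
by rewrite (drop A mA) (drop B mB) AB.
Qed.

End ProbabilityFacts.

Section Boxes.
Context (R : realType) (n : nat).

Definition box (B : 'I_n -> set R) : set (n.-tuple R) :=
  [set t | forall k, B k (tnth t k)].

Definition boxes : set (set (n.-tuple R)) :=
  [set A | exists B, (forall k, measurable (B k)) /\ A = box B].

Lemma measurable_box B : (forall k, measurable (B k)) -> measurable (box B).
Proof.
move=> mB; apply: measurable_forall => k.
by rewrite -[X in measurable X]setTI; apply: measurable_tnth.
Qed.

Lemma boxes_generate : (measurable : set (set (n.-tuple R))) = <<s boxes >>.
Proof.
apply/seteqP; split; last first.
  apply: smallest_sub; first exact: sigma_algebra_measurable.
  by move=> _ [B [mB ->]]; exact: measurable_box.
apply: smallest_sub; first exact: smallest_sigma_algebra.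
move=> A; rewrite -bigcup_seq => -[i _ [Y mY <-]]; apply: sub_sigma_algebra.
exists (fun k => if k == i then Y else setT); split; first by move=> k; case: ifP.
apply/seteqP; split => t /=; first by move=> [_ Yt] k; case: eqP => [->|].
by move=> /(_ i); rewrite eqxx.
Qed.

Lemma boxes_setI : setI_closed boxes.
Proof.
move=> _ _ [B1 [mB1 ->]] [B2 [mB2 ->]].
exists (fun k => B1 k `&` B2 k); split; first by move=> k; exact: measurableI.
by apply/seteqP; split => t /=; [move=> [H1 H2] k|move=> H; split => k; case: (H k)].
Qed.

Lemma boxes_setT : boxes setT.
Proof. by exists (fun _ => setT); split => //; apply/seteqP; split. Qed.

End Boxes.

Section IIDFamily.
Context d (T : measurableType d) (R : realType) (P : probability T R).
Context (n : nat) (D : probability R R) (X : 'I_n -> {RV P >-> R}).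
Hypothesis iidX : iid_with_law X D.
Local Notation pr := (prob P).

Lemma measurable_X k : measurable_fun setT (X k).
Proof. exact: measurable_funP. Qed.

Lemma measurable_X_preimage k A : measurable A -> measurable (X k @^-1` A).
Proof. by move=> mA; exact: measurable_funPTI. Qed.

Lemma law_X k A : measurable A -> P (X k @^-1` A) = D A.
Proof. by move=> mA; case: iidX => _ law; rewrite -(law k A mA). Qed.

Lemma prob_coordinates (B : 'I_n -> set R) : (forall k, measurable (B k)) ->
  pr [set w | forall k, B k (X k w)] = \prod_(k < n) fine (D (B k)).
Proof.
move=> mB; have [indep _] := iidX.
rewrite (_ : [set w | _] = \bigcap_(k in [set: 'I_n]) (X k @^-1` B k)).
  by rewrite indep //; apply: eq_bigr => k _; rewrite /prob law_X.
by apply/seteqP; split => w /= H k; [move=> _|]; apply: H.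
Qed.

Definition permuted_vector (s : {perm 'I_n}) (w : T) : n.-tuple R :=
  [tuple X (s k) w | k < n].

Lemma measurable_permuted_vector s : measurable_fun setT (permuted_vector s).
Proof.
apply/measurable_fun_tnthP => k.
rewrite (_ : _ \o _ = X (s k)); first exact: measurable_X.
by apply/funext => w /=; rewrite tnth_mktuple.
Qed.

Lemma prob_permuted_box s B : (forall k, measurable (B k)) ->
  P (permuted_vector s @^-1` box B) = (\prod_(k < n) fine (D (B k)))%:E.
Proof.
move=> mB.
have -> : permuted_vector s @^-1` box B = [set w | forall k, B ((s^-1)%g k) (X k w)].
  apply/seteqP; split => w /= H k.
    by have := H (s^-1 k)%g; rewrite tnth_mktuple permKV.
  by rewrite tnth_mktuple; have := H (s k); rewrite permK.
rewrite probE; last by apply: measurable_forall => k; apply: measurable_X_preimage.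
rewrite (prob_coordinates (B := fun k => B ((s^-1)%g k))) //.
by rewrite (reindex_inj (@perm_inj _ s)); under eq_bigr do rewrite permK.
Qed.

Lemma permuted_vector_law s A : measurable A ->
  P (permuted_vector 1%g @^-1` A) = P (permuted_vector s @^-1` A).
Proof.
move=> mA.
pose V (t : {perm 'I_n}) : {mfun T >-> n.-tuple R} := HB.pack (permuted_vector t)
  (isMeasurableFun.Build _ _ _ _ _ (measurable_permuted_vector t)).
have := @measure_unique _ R _ (@boxes R n) (fun _ => setT) (@boxes_generate R n) _ _ _
  (distribution P (V 1%g)) (distribution P (V s)) _ _ A mA; apply.
- exact: boxes_setI.
- by move=> _; exact: boxes_setT.
- by rewrite bigcup_const.
- move=> _ [B [mB ->]].
  by change (P (permuted_vector 1 @^-1` box B) = P (permuted_vector s @^-1` box B));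
    rewrite !prob_permuted_box.
- move=> _; change (P (permuted_vector 1 @^-1` setT) < +oo)%E.
  by rewrite preimage_setT probability_setT ltry.
Qed.

End IIDFamily.

Section ContinuousIID.
Context d (T : measurableType d) (R : realType) (P : probability T R).
Context (n : nat) (D : probability R R) (X : 'I_n -> {RV P >-> R}).
Hypothesis iidX : iid_with_law X D.
Hypothesis contD : continuous_law_nonneg D.
Local Notation pr := (prob P).

Lemma prob_pair i j A B : i != j -> measurable A -> measurable B ->
  pr [set w | A (X i w) /\ B (X j w)] = fine (D A) * fine (D B).
Proof.
move=> ij mA mB.
pose C k := if k == i then A else if k == j then B else setT.
have mC k : measurable (C k) by rewrite /C; case: ifP => //; case: ifP.
have -> : [set w | A (X i w) /\ B (X j w)] = [set w | forall k, C k (X k w)].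
  apply/seteqP; split => w /=.
    by move=> [Ai Bj] k; rewrite /C; case: eqP => [->//|_]; case: eqP => [->|].
  move=> H; split; first by have := H i; rewrite /C eqxx.
  by have := H j; rewrite /C eq_sym (negbTE ij) eqxx.
rewrite (prob_coordinates iidX mC) (bigD1 i) //= (bigD1 j) 1?eq_sym //=.
rewrite big1 ?mulr1; first by rewrite /C eqxx eq_sym (negbTE ij) eqxx.
by move=> k /andP[ki kj]; rewrite /C (negbTE ki) (negbTE kj) probability_setT.
Qed.

(* the law of a pair of distinct coordinates is the product measure D x D,
   which does not charge the diagonal since D has no atoms *)
Lemma prob_tie i j : i != j -> pr [set w | X i w = X j w] = 0.
Proof.
move=> ij.
have mXij : measurable_fun setT (fun w => (X i w, X j w)).
  by apply: measurable_fun_pair; exact: measurable_X.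
pose Xij : {mfun T >-> (R * R)%type} := HB.pack (fun w => (X i w, X j w))
  (isMeasurableFun.Build _ _ _ _ _ mXij).
pose diag : set (R * R) := (fun p => p.1 - p.2) @^-1` [set 0].
have mdiag : measurable diag.
  rewrite -[X in measurable X]setTI.
  by apply: measurable_funB => //; exact: measurable_set1.
have -> : [set w | X i w = X j w] = Xij @^-1` diag.
  apply/seteqP; split => w; rewrite /diag /=; first by move=> ->; rewrite subrr.
  by move/eqP; rewrite subr_eq0 => /eqP.
rewrite /prob -[P _]/(distribution P Xij diag).
rewrite -(@product_measure_unique _ _ R R R D D (distribution P Xij) _ diag mdiag); last first.
  move=> A B mA mB; change (P [set w | A (X i w) /\ B (X j w)] = D A * D B)%E.
  rewrite probE; last by apply: (measurableI (X i @^-1` A) (X j @^-1` B));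
    apply: measurable_X_preimage.
  by rewrite prob_pair // -(fineK (fin_num_measure D _ mA)) -(fineK (fin_num_measure D _ mB)).
rewrite /product_measure1 /= integral0_eq // => x _ /=.
rewrite (_ : xsection diag x = [set x]); first by case: contD => ->.
apply/seteqP; split => y; rewrite /xsection /diag /= inE /=.
  by move/eqP; rewrite subr_eq0 => /eqP ->.
by move=> ->; rewrite subrr.
Qed.

Lemma prob_negative i : pr [set w | X i w < 0] = 0.
Proof.
have -> : [set w | X i w < 0] = X i @^-1` (~` `[0, +oo[%classic).
  by apply/seteqP; split => w /=; rewrite in_itv /= andbT ltNge => /negP.
rewrite /prob (law_X iidX) //; last exact: measurableC.
by rewrite probability_setC //; case: contD => _ ->; rewrite subee.
Qed.

End ContinuousIID.

Section Argmax.
Context (R : realType) (n : nat).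

Lemma argmax_unique (f : 'I_n -> R) i j : is_argmax f i -> is_argmax f j -> i = j.
Proof.
move=> fi fj; apply/eqP/negPn/negP => ij.
by have := fj _ ij; rewrite eq_sym in ij; have := fi _ ij; lra.
Qed.

Lemma argmax_ge (f : 'I_n -> R) i k : is_argmax f i -> f k <= f i.
Proof. by move=> fi; have [->|ki] := eqVneq k i; [|exact/ltW/fi]. Qed.

(* Properties of a vector of distinct nonnegative values: these hold for the
   applicants' values outside a null event. *)
Variable x : 'I_n -> R.
Hypothesis x_distinct : forall i j, i != j -> x i != x j.
Hypothesis x_ge0 : forall i, 0 <= x i.

Lemma argmax_exists : (0 < n)%N -> exists i, is_argmax x i.
Proof.
move=> n0; have [i _ ge_i] := @arg_maxP _ R _ (Ordinal n0) xpredT x erefl.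
by exists i => k ki; rewrite lt_neqAle x_distinct //=; exact: ge_i.
Qed.

(* Holistic allocation with exactly one biased evaluator: the applicants in B
   (disadvantaged and graded by the biased evaluator) score 0, the others 2 x. *)
Lemma holistic_error_iff (B : pred 'I_n) : (1 < n)%N ->
  (~ exists i, is_argmax x i /\ is_argmax (fun k => if B k then 0 else x k + x k) i) <->
  (exists i, B i /\ is_argmax x i).
Proof.
move=> n1; have [i xi] := argmax_exists (ltnW n1); split.
  move=> wrong; exists i; split => //; apply/negPn/negP => Bi; apply: wrong.
  exists i; split => // k ki /=; rewrite (negbTE Bi).
  by have := xi k ki; have := x_ge0 k; case: (B k) => *; lra.
move=> [j [Bj xj]] [k [xk sk]]; rewrite (argmax_unique xk xj) in sk.
have [l lj] : exists l, l != j.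
  by case: j {Bj xj sk} => -[|m] jn; [exists (Ordinal n1)|exists (Ordinal (ltnW n1))].
by have := sk l lj; have := x_ge0 l; rewrite /= Bj; case: (B l) => *; lra.
Qed.

(* Segmented allocation with exactly one biased evaluator: disadvantaged
   applicants score x, advantaged ones 2 x. *)
Lemma segmented_error_iff (ID : {set 'I_n}) : (0 < n)%N ->
  (~ exists i, is_argmax x i /\
      is_argmax (fun k => if k \in ID then x k else x k + x k) i) <->
  (exists i, i \in ID /\ is_argmax x i) /\
  ~ (exists i, i \in ID /\ forall k, k \notin ID -> 2 * x k < x i).
Proof.
move=> n0; have [i xi] := argmax_exists n0; split.
  move=> wrong; have iID : i \in ID.
    apply/negPn/negP => iA; apply: wrong; exists i; split => // k ki /=.
    by rewrite (negbTE iA); have := xi k ki; have := x_ge0 k; case: (k \in ID) => *; lra.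
  split; first by exists i.
  move=> [j [jID jdom]]; apply: wrong; exists i; split => // k ki /=.
  rewrite iID; have := xi k ki; have := argmax_ge k xi; have := argmax_ge j xi.
  by case kID: (k \in ID) => //; have := jdom k (negbT kID); lra.
move=> [[j [jID xj]] notdom] [k [xk sk]]; rewrite (argmax_unique xk xj) in sk.
apply: notdom; exists j; split => // l lA.
have lj : l != j by apply: contraNneq lA => ->.
by have := sk l lj; rewrite /= jID (negbTE lA); lra.
Qed.

Lemma dominant_is_top (ID : {set 'I_n}) : (0 < n)%N ->
  (exists i, i \in ID /\ forall k, k \notin ID -> 2 * x k < x i) ->
  (exists i, i \in ID /\ is_argmax x i).
Proof.
move=> n0 [i [iID idom]]; have [j xj] := argmax_exists n0.
exists j; split => //; apply/negPn/negP => jA.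
by have := idom j jA; have := argmax_ge i xj; have := x_ge0 j; lra.
Qed.

End Argmax.

Section Scores.
Context (R : realType) (n : nat) (ID : {set 'I_n}).
Local Notation all_protected := (fun _ : 'I_2 => true).
Local Notation score0 := (score 0 ID all_protected).

Lemma score_zero_beta (b : {ffun bool -> bool}) alloc (x : 'I_n -> R) i :
  score0 b alloc x i =
  (if b (alloc i ord0) && (i \in ID) then 0 else x i) +
  (if b (alloc i ord_max) && (i \in ID) then 0 else x i).
Proof.
rewrite /score /report big_ord_recr big_ord1 /= !mul0r.
by rewrite (_ : widen_ord _ ord0 = ord0) //; apply: val_inj.
Qed.

Lemma score_same_bias (b : {ffun bool -> bool}) alloc alloc' (x : 'I_n -> R) :
  b false = b true -> score0 b alloc x = score0 b alloc' x.
Proof.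
move=> hb; apply/funext => i; rewrite !score_zero_beta.
have same_bias e e' : b e = b e' by case: e; case: e'.
by rewrite (same_bias (alloc i ord0) (alloc' i ord0))
  (same_bias (alloc i ord_max) (alloc' i ord_max)).
Qed.

Lemma score_segmented (b : {ffun bool -> bool}) c (x : 'I_n -> R) i :
  b false != b true ->
  score0 b (seg_alloc c) x i = if i \in ID then x i else x i + x i.
Proof.
rewrite score_zero_beta /seg_alloc.
by case: c => /=; case: (b false); case: (b true); case: (i \in ID);
  rewrite //= ?add0r ?addr0.
Qed.

Lemma score_holistic (b : {ffun bool -> bool}) S (x : 'I_n -> R) i :
  score0 b (hol_alloc S) x i =
  if b (i \notin S) && (i \in ID) then 0 else x i + x i.
Proof. by rewrite score_zero_beta /hol_alloc; case: ifP; rewrite ?addr0. Qed.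

End Scores.

Definition bias_pattern (x y : bool) : {ffun bool -> bool} :=
  [ffun e : bool => if e then y else x].

Lemma sum_bias_patterns (V : nmodType) (F : {ffun bool -> bool} -> V) :
  \sum_b F b = \sum_(x : bool) \sum_(y : bool) F (bias_pattern x y).
Proof.
rewrite pair_big (reindex (fun p : bool * bool => bias_pattern p.1 p.2)) //=.
exists (fun b : {ffun bool -> bool} => (b false, b true)) => [[x y] _|b _] /=.
  by rewrite !ffunE.
by apply/ffunP => e; rewrite ffunE; case: e.
Qed.

Lemma bias_weight_pattern (R : realType) (gamma : R) x y : bias_weight gamma (bias_pattern x y) =
  (if y then gamma else 1 - gamma) * (if x then gamma else 1 - gamma).
Proof. by rewrite /bias_weight big_bool /= !ffunE. Qed.

Section TwoEvaluators.
Context d (T : measurableType d) (R : realType) (P : probability T R).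
Context (n : nat) (D : probability R R) (X : 'I_n -> {RV P >-> R}) (ID : {set 'I_n}).
Hypothesis n_gt0 : (0 < n)%N.
Hypothesis n_even : ~~ odd n.
Hypothesis card_ID : #|ID| = n./2.
Hypothesis contD : continuous_law_nonneg D.
Hypothesis iidX : iid_with_law X D.
Local Notation pr := (prob P).
Local Notation all_protected := (fun _ : 'I_2 => true).

Lemma n_gt1 : (1 < n)%N.
Proof. by case: n n_gt0 n_even => [|[|m]]. Qed.

Lemma half_ID : #|ID|%:R / n%:R = 2^-1 :> R.
Proof.
have n2 : n = (n./2 * 2)%N by rewrite muln2 -[LHS](odd_double_half n) (negbTE n_even).
rewrite card_ID [in n%:R]n2 natrM invfM mulrA mulfV ?mul1r // pnatr_eq0 -lt0n.
by case: (n./2) n2 => [n0|//]; move: n_gt0; rewrite n0.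
Qed.

Definition top i : set T := [set w | is_argmax (fun k => X k w) i].

Definition top_in (B : {set 'I_n}) : set T := [set w | exists i, i \in B /\ top i w].

Definition degenerate : set T :=
  [set w | exists p : 'I_n * 'I_n, p.1 != p.2 /\ X p.1 w = X p.2 w] `|`
  [set w | exists i, X i w < 0].

Lemma measurable_top i : measurable (top i).
Proof.
apply: measurable_forall => k.
by apply/measurable_guard_imp/measurable_lt; apply: measurable_X.
Qed.

Lemma measurable_top_in B : measurable (top_in B).
Proof. by apply: measurable_exists => i; apply/measurable_guard_and/measurable_top. Qed.

Lemma measurable_degenerate : measurable degenerate.
Proof.
apply: measurableU; apply: measurable_exists.
  by move=> p; apply/measurable_guard_and/measurable_eq; apply: measurable_X.
by move=> i; apply: measurable_lt => //; apply: measurable_X.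
Qed.

Lemma prob_degenerate : pr degenerate = 0.
Proof.
have mtie (p : 'I_n * 'I_n) : measurable [set w | p.1 != p.2 /\ X p.1 w = X p.2 w].
  by apply/measurable_guard_and/measurable_eq; apply: measurable_X.
have mneg i : measurable [set w | X i w < 0].
  by apply: measurable_lt => //; apply: measurable_X.
apply: prob_nullU; try exact: measurable_exists.
  apply: prob_null_exists => // -[i j] /=; have [<-|ij] := eqVneq i j.
    rewrite (_ : (fun w => _) = set0) ?/prob ?measure0 //.
    by apply/funext => w; apply/propext; split => -[].
  rewrite (_ : (fun w => _) = [set w | X i w = X j w]); first exact: (prob_tie iidX contD ij).
  by apply/funext => w; apply/propext; split => [[]|].
apply: (prob_null_exists (F := fun i => [set w | X i w < 0])) => // i.
exact: (prob_negative iidX contD).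
Qed.

Lemma prob_eq_generic A B : measurable A -> measurable B ->
  (forall w, (forall i j, i != j -> X i w != X j w) -> (forall i, 0 <= X i w) ->
     (A w <-> B w)) ->
  pr A = pr B.
Proof.
move=> mA mB AB; apply: (prob_eq_outside_null mA mB measurable_degenerate prob_degenerate).
have generic w : ~ degenerate w -> A w <-> B w.
  move=> ndeg; apply: AB => [i j ij|i].
    by apply/eqP => eqij; apply: ndeg; left; exists (i, j).
  by rewrite leNgt; apply/negP => neg; apply: ndeg; right; exists i.
by apply/seteqP; split => w [Hw ndeg]; split => //; apply/(generic w ndeg).
Qed.

Lemma top_disjoint i j : i != j -> top i `&` top j = set0.
Proof.
move=> ij; apply/seteqP; split => w // [ti tj].
by have := argmax_unique ti tj; apply/eqP.
Qed.

(* exchangeability: all applicants are equally likely to be the best *)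
Lemma prob_top_perm i j : pr (top i) = pr (top j).
Proof.
pose topT : set (n.-tuple R) := [set t | forall k, k != i -> tnth t k < tnth t i].
have mtopT : measurable topT.
  by apply: measurable_forall => k; apply/measurable_guard_imp/measurable_lt;
    apply: measurable_tnth.
pose s := tperm i j.
have -> : top i = permuted_vector X 1%g @^-1` topT.
  by apply/seteqP; split => w /= H k; have := H k; rewrite !tnth_mktuple !perm1.
have -> : top j = permuted_vector X s @^-1` topT.
  apply/seteqP; split => w /= H k.
    rewrite !tnth_mktuple /s tpermL => ki; apply: H.
    by rewrite -[X in _ != X](tpermL i j) (inj_eq perm_inj).
  move=> kj; have := H (s k); rewrite !tnth_mktuple /s tpermL tpermK; apply.
  by rewrite -[X in _ != X](tpermR i j) (inj_eq perm_inj).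
by rewrite /prob (permuted_vector_law iidX s mtopT).
Qed.

Lemma prob_top_in_sum B : pr (top_in B) = \sum_(i in B) pr (top i).
Proof.
rewrite /top_in existsE_cond prob_bigsetU //; first exact: measurable_top.
exact: top_disjoint.
Qed.

Lemma prob_top i : pr (top i) = n%:R^-1.
Proof.
have top_some : pr (top_in [set: 'I_n]) = 1.
  transitivity (pr setT); last by rewrite /prob probability_setT.
  apply: prob_eq_generic => // [|w distinct _]; first exact: measurable_top_in.
  split => // _; have [k topk] := argmax_exists distinct n_gt0.
  by exists k; rewrite inE.
move: top_some; rewrite prob_top_in_sum (eq_bigr (fun=> pr (top i))); last first.
  by move=> k _; exact: prob_top_perm.
rewrite sumr_const cardsT card_ord => sum_top.
have n_neq0 : n%:R != 0 :> R by rewrite pnatr_eq0 -lt0n.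
by apply: (mulfI n_neq0); rewrite mulfV // mulr_natl.
Qed.

Lemma prob_top_in B : pr (top_in B) = #|B|%:R / n%:R.
Proof.
rewrite prob_top_in_sum (eq_bigr (fun=> n%:R^-1)) ?sumr_const ?mulr_natl //.
by move=> i _; exact: prob_top.
Qed.

Lemma measurable_error (sc : 'I_n -> T -> R) : (forall k, measurable_fun setT (sc k)) ->
  measurable [set w | ~ exists i, top i w /\ is_argmax (fun k => sc k w) i].
Proof.
move=> msc; apply/measurableC/measurable_exists => i; apply: measurableI.
  exact: measurable_top.
by apply: measurable_forall => k; apply/measurable_guard_imp/measurable_lt.
Qed.

Lemma measurable_dominance : measurable (maxD_gt_2maxA ID X).
Proof.
apply: measurable_exists => i; apply/measurable_guard_and/measurable_forall => k.
apply/measurable_guard_imp/measurable_lt; last exact: measurable_X.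
by apply: measurable_funM; [exact: measurable_cst|exact: measurable_X].
Qed.

Lemma segmented_error_eventE (b : {ffun bool -> bool}) c : b false != b true ->
  err_event 0 ID all_protected b (seg_alloc c) X =
  [set w | ~ exists i, top i w /\
     is_argmax (fun k => if k \in ID then X k w else X k w + X k w) i].
Proof.
move=> mixed; apply/funext => w; rewrite /err_event /top /=.
by under [score _ _ _ _ _ _]funext do rewrite score_segmented //.
Qed.

Lemma holistic_error_eventE (b : {ffun bool -> bool}) S :
  err_event 0 ID all_protected b (hol_alloc S) X =
  [set w | ~ exists i, top i w /\
     is_argmax (fun k => if b (k \notin S) && (k \in ID) then 0 else X k w + X k w) i].
Proof.
apply/funext => w; rewrite /err_event /top /=.
by under [score _ _ _ _ _ _]funext do rewrite score_holistic.
Qed.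

(* Segmented allocation with one biased evaluator errs exactly when the best
   applicant is disadvantaged without dominating twice the advantaged ones. *)
Lemma prob_segmented_error (b : {ffun bool -> bool}) c : b false != b true ->
  pr (err_event 0 ID all_protected b (seg_alloc c) X) = 2^-1 - pr (maxD_gt_2maxA ID X).
Proof.
move=> mixed; rewrite segmented_error_eventE //.
set E := [set w | ~ _]; set Dom := maxD_gt_2maxA ID X.
have mE : measurable E.
  apply: measurable_error => k; case: (k \in ID); first exact: measurable_X.
  by apply: measurable_funD; exact: measurable_X.
have mTop := measurable_top_in ID; have mDom := measurable_dominance.
have mnDom : measurable (~` Dom) by exact: measurableC.
have E_ae : pr E = pr (top_in ID `&` ~` Dom).
  apply: prob_eq_generic => // [|w distinct ge0]; first exact: measurableI.
  exact: (segmented_error_iff distinct ge0 ID n_gt0).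
have Dom_ae : pr (top_in ID `&` Dom) = pr Dom.
  apply: prob_eq_generic => // [|w distinct ge0]; first exact: measurableI.
  split => [[]//|dom]; split => //.
  exact: (dominant_is_top distinct ge0 n_gt0).
have top_split : pr (top_in ID) = pr (top_in ID `&` ~` Dom) + pr (top_in ID `&` Dom).
  rewrite -probU; first by rewrite -setIUr setUCl setIT.
  - exact: measurableI mTop mnDom.
  - exact: measurableI mTop mDom.
  by rewrite setIACA setICl setI0.
by move: top_split; rewrite prob_top_in half_ID E_ae Dom_ae => ->; rewrite addrK.
Qed.

(* Holistic allocation errs exactly when the best applicant is disadvantaged
   and graded by a biased evaluator. *)
Lemma prob_holistic_error (b : {ffun bool -> bool}) S :
  pr (err_event 0 ID all_protected b (hol_alloc S) X) =
  #|[set i in ID | b (i \notin S)]%SET|%:R / n%:R.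
Proof.
rewrite -prob_top_in holistic_error_eventE.
pose B : pred 'I_n := fun k => b (k \notin S) && (k \in ID).
apply: prob_eq_generic; last first.
- move=> w distinct ge0; apply: iff_trans (holistic_error_iff distinct ge0 B n_gt1) _.
  by split => -[i [iB topi]]; exists i; move: iB; rewrite inE andbC.
- exact: measurable_top_in.
- apply: measurable_error => k; case: (b (k \notin S) && (k \in ID)).
    exact: measurable_cst.
  by apply: measurable_funD; exact: measurable_X.
Qed.

Lemma error_event_same_bias (b : {ffun bool -> bool}) alloc alloc' : b false = b true ->
  err_event 0 ID all_protected b alloc X = err_event 0 ID all_protected b alloc' X.
Proof.
by move=> same; apply/funext => w; rewrite /err_event /= (score_same_bias ID alloc alloc' _ same).
Qed.

Definition nb_splits : nat := #|[set S : {set 'I_n} | #|S| == n./2]|.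

Lemma sum_splits_const (r : R) :
  \sum_(S : {set 'I_n} | #|S| == n./2) r = nb_splits%:R * r.
Proof.
rewrite (eq_bigl (fun S => S \in [set S : {set 'I_n} | #|S| == n./2])).
  by rewrite sumr_const mulr_natl.
by move=> S /=; apply/idP/idP => [?|/set_mem //]; apply/mem_set.
Qed.

Lemma nb_splits_neq0 : nb_splits%:R != 0 :> R.
Proof.
by rewrite pnatr_eq0 -lt0n; apply/card_gt0P; exists ID; apply/mem_set; rewrite /= card_ID.
Qed.

Definition error_gap (b : {ffun bool -> bool}) : R :=
  nb_splits%:R^-1 * \sum_(S : {set 'I_n} | #|S| == n./2)
      pr (err_event 0 ID all_protected b (hol_alloc S) X) -
  2^-1 * \sum_(c : bool) pr (err_event 0 ID all_protected b (seg_alloc c) X).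

Lemma err_diff_gaps (gamma : R) :
  err_hol 0 gamma ID all_protected X - err_seg 0 gamma ID all_protected X =
  \sum_b bias_weight gamma b * error_gap b.
Proof. by rewrite /err_hol /err_seg -sumrB; apply: eq_bigr => b _; rewrite -mulrBr. Qed.

Lemma error_gap_same_bias (b : {ffun bool -> bool}) : b false = b true -> error_gap b = 0.
Proof.
move=> same; pose e := pr (err_event 0 ID all_protected b (fun _ _ => false) X).
have err_e alloc : pr (err_event 0 ID all_protected b alloc X) = e.
  by rewrite (error_event_same_bias _ (fun _ _ => false) same).
rewrite /error_gap (eq_bigr (fun=> e)) => [|S _]; last exact: err_e.
rewrite (eq_bigr (fun=> e) (P := xpredT)) => [|c _]; last exact: err_e.
by rewrite sum_splits_const big_bool /= mulKf ?nb_splits_neq0 //; lra.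
Qed.

(* Whichever evaluator is biased, the disadvantaged applicants it grades in a
   split S are those of ID outside or inside S respectively. *)
Lemma card_biased_graded (S : {set 'I_n}) :
  (#|[set i in ID | bias_pattern false true (i \notin S)]%SET| +
   #|[set i in ID | bias_pattern true false (i \notin S)]%SET|)%N = #|ID|.
Proof.
rewrite -(cardsID S ID) addnC; congr (_ + _)%N; apply: eq_card => i;
  by rewrite !inE !ffunE; case: (i \in S); case: (i \in ID).
Qed.

Lemma error_gap_mixed :
  error_gap (bias_pattern false true) + error_gap (bias_pattern true false) =
  2 * pr (maxD_gt_2maxA ID X) - 2^-1.
Proof.
rewrite /error_gap !big_bool /= !prob_segmented_error ?ffunE //.
under eq_bigr do rewrite prob_holistic_error.
under [X in _ + (_ * X - _)]eq_bigr do rewrite prob_holistic_error.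
set p := pr _; set N := nb_splits%:R^-1.
have -> a1 a2 c : N * a1 - c + (N * a2 - c) = N * (a1 + a2) - 2 * c by lra.
rewrite -big_split /= (eq_bigr (fun=> 2^-1)) => [|S _]; last first.
  by rewrite -mulrDl -natrD card_biased_graded half_ID.
by rewrite sum_splits_const mulrA mulVf ?nb_splits_neq0 // mul1r; lra.
Qed.

(* Only the two mixed bias patterns, each of weight gamma (1 - gamma),
   contribute to the difference of the expected errors. *)
Lemma err_diff_formula (gamma : R) :
  err_hol 0 gamma ID all_protected X - err_seg 0 gamma ID all_protected X =
  gamma * (1 - gamma) / 2 * (4 * pr (maxD_gt_2maxA ID X) - 1).
Proof.
rewrite err_diff_gaps sum_bias_patterns !big_bool /= !bias_weight_pattern.
rewrite [error_gap (bias_pattern true true)]error_gap_same_bias ?ffunE //.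
rewrite [error_gap (bias_pattern false false)]error_gap_same_bias ?ffunE //.
have := error_gap_mixed; set p := pr _; set g1 := error_gap _; set g2 := error_gap _.
move=> mixed; have -> : gamma * (1 - gamma) / 2 * (4 * p - 1) = gamma * (1 - gamma) * (g1 + g2).
  by rewrite mixed; field.
ring.
Qed.

End TwoEvaluators.

Unset Implicit Arguments.

Theorem theorem1 (d : measure_display) (T : measurableType d) (R : realType)
  (P : probability T R) (n : nat) (D : probability R R)
  (X : 'I_n -> {RV P >-> R}) (ID : {set 'I_n}) :
  (0 < n)%N -> ~~ odd n -> #|ID| = n./2 ->
  continuous_law_nonneg D -> iid_with_law X D ->
  forall gamma : R, 0 < gamma < 1 ->
    let prot := fun _ : 'I_2 => true in
    let eh := err_hol 0 gamma ID prot X in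
    let es := err_seg 0 gamma ID prot X in
    let p := prob P (maxD_gt_2maxA ID X) in
    eh - es = gamma * (1 - gamma) / 2 * (4 * p - 1) /\
    (es < eh <-> 4^-1 < p).
Proof.
move=> n_gt0 n_even card_ID contD iidX gamma /andP[gamma_gt0 gamma_lt1] prot eh es p.
have diff : eh - es = gamma * (1 - gamma) / 2 * (4 * p - 1).
  exact: (err_diff_formula n_gt0 n_even card_ID contD iidX gamma).
split => //.
have weight_gt0 : 0 < gamma * (1 - gamma) / 2.
  by rewrite divr_gt0 // mulr_gt0 // subr_gt0.
by rewrite -[es < eh]subr_gt0 diff pmulr_rgt0 //; split => ?; lra.
Qed.
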